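(* Let $(B,D,d,\theta)$ be a crossed module, $A$ an abelian group and $\zeta:\operatorname{Ker}d\to A$ a surjective abstract $\zeta$-kernel of this crossed module. Then there exists a $\zeta$-extension of co-type $B\xrightarrow{d}D$ if and only if the obstruction $\operatorname{Obs}(\zeta)$ vanishes in $H^3(\operatorname{Coker}d,A)$ (with $\operatorname{Coker}d$ acting trivially on $A$).
   Context: A crossed module $(B,D,d,\theta)$: groups $B,D$, homomorphisms $d:B\to D$, $\theta:D\to\operatorname{Aut}B$ with $\theta_{d(b)}(b')=bb'b^{-1}$ and $d(\theta_x(b))=x\,d(b)\,x^{-1}$. Then $\operatorname{Ker}d\subseteq Z(B)$, $d(B)\trianglelefteq D$ and $\operatorname{Ker}d$ is a $\operatorname{Coker}d=D/d(B)$-module via $s\cdot c=\theta_x(c)$, $x\in s$. An abstract $\zeta$-kernel: a homomorphism $\zeta:\operatorname{Ker}d\to A$ ($A$ abelian) with $\zeta(\theta_x(c))=\zeta(c)$ for all $x\in D,c\in\operatorname{Ker}d$. A $\zeta$-extension of co-type $B\xrightarrow{d}D$: an exact sequence of groups $0\to A\xrightarrow{j}E\xrightarrow{p}D\to1$ with $j(A)\subseteq Z(E)$, together with a homomorphism $\beta:B\to E$ such that $p\beta=d$, $\beta(\theta_x b)=e\,\beta(b)\,e^{-1}$ whenever $p(e)=x$, and $j(\zeta(c))=\beta(c)$ for all $c\in\operatorname{Ker}d$. Obstruction: choose representatives $x_s\in D$ of each $s\in\operatorname{Coker}d$ ($x_1=1$) and for each $x$ in class $s$ an element $b_x\in B$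 with $x_s=d(b_x)x$, $b_{x_s}=0$ (writing $B$ additively, not necessarily abelian). Put $\tilde H_{r,s}=-b_{x_rx_s}$ and define $k:(\operatorname{Coker}d)^3\to\operatorname{Ker}d$ by $\theta_{x_s}(\tilde H_{r,t})+\tilde H_{s,rt}+k(s,r,t)=\tilde H_{s,r}+\tilde H_{sr,t}$; $k$ is a 3-cocycle of $\operatorname{Coker}d$ with values in $\operatorname{Ker}d$. Then $\operatorname{Obs}(\zeta)=[\zeta\circ k]\in H^3(\operatorname{Coker}d,A)$. *)

From HB Require Import structures.
From mathcomp Require Import all_boot all_algebra.

Set Implicit Arguments.
Unset Strict Implicit.
Unset Printing Implicit Defensive.

Definition ghom (G H : groupType) (f : G -> H) : Prop :=
  forall x y : G, f (x * y)%g = (f x * f y)%g.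

(* (B,D,d,theta) is a crossed module: d : B -> D hom, theta : D -> Aut B hom
   (each theta x is an endomorphism, theta (x y) = theta x o theta y,
   theta 1 = id, hence each theta x is an automorphism), plus the two
   crossed-module identities. *)
Definition crossed_module (B D : groupType) (d : B -> D) (theta : D -> B -> B)
  : Prop :=
  ghom d /\
  (forall x : D, ghom (theta x)) /\
  (forall (x y : D) (b : B), theta (x * y)%g b = theta x (theta y b)) /\
  (forall b : B, theta 1%g b = b) /\
  (forall b b' : B, theta (d b) b' = (b * b' * b^-1)%g) /\
  (forall (x : D) (b : B), d (theta x b) = (x * d b * x^-1)%g).

Definition is_cokernel (B D Q : groupType) (d : B -> D) (pi : D -> Q) : Prop :=
  [/\ ghom pi,
      (forall s : Q, exists x : D, pi x = s) &
      (forall x : D, pi x = 1%g <-> exists b : B, x = d b)].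

(* Abstract zeta-kernel.  zeta is given as a function on all of B, but only
   its restriction to Ker d = {c | d c = 1} is ever used: it is a
   homomorphism Ker d -> A invariant under theta. *)
Definition abstract_kernel (B D : groupType) (A : zmodType) (d : B -> D)
  (theta : D -> B -> B) (zeta : B -> A) : Prop :=
  (forall c c' : B, d c = 1%g -> d c' = 1%g ->
      zeta (c * c')%g = (zeta c + zeta c')%R) /\
  (forall (x : D) (c : B), d c = 1%g -> zeta (theta x c) = zeta c).

Definition kernel_surjective (B D : groupType) (A : zmodType) (d : B -> D)
  (zeta : B -> A) : Prop :=
  forall a : A, exists c : B, d c = 1%g /\ zeta c = a.

Definition zeta_extension_exists (B D : groupType) (A : zmodType)
  (d : B -> D) (theta : D -> B -> B) (zeta : B -> A) : Prop :=
  exists (E : groupType) (j : A -> E) (p : E -> D) (beta : B -> E),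
    (forall a a' : A, j (a + a')%R = (j a * j a')%g) /\
    ghom p /\
    injective j /\
    (forall e : E, p e = 1%g <-> exists a : A, e = j a) /\
    (forall x : D, exists e : E, p e = x) /\
    (forall (a : A) (e : E), (j a * e)%g = (e * j a)%g) /\
    ghom beta /\
    (forall b : B, p (beta b) = d b) /\
    (forall (x : D) (e : E) (b : B), p e = x ->
        beta (theta x b) = (e * beta b * (e^-1))%g) /\
    (forall c : B, d c = 1%g -> j (zeta c) = beta c).

Definition obstruction_data (B D Q : groupType) (d : B -> D) (pi : D -> Q)
  (xs : Q -> D) (bx : D -> B) : Prop :=
  [/\ (forall s : Q, pi (xs s) = s),
      xs 1%g = 1%g,
      (forall x : D, xs (pi x) = (d (bx x) * x)%g) &
      (forall s : Q, bx (xs s) = 1%g)].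

Definition Htil (B D Q : groupType) (xs : Q -> D) (bx : D -> B) (r s : Q) : B :=
  (bx (xs r * xs s)%g)^-1%g.

(* k(s,r,t) defined by
   theta_{x_s}(H_{r,t}) + H_{s,rt} + k(s,r,t) = H_{s,r} + H_{sr,t}
   (B written additively, not necessarily abelian), i.e.
   k(s,r,t) = (theta_{x_s}(H_{r,t}) H_{s,rt})^{-1} (H_{s,r} H_{sr,t}). *)
Definition obs_k (B D Q : groupType) (theta : D -> B -> B) (xs : Q -> D)
  (bx : D -> B) (s r t : Q) : B :=
  ((theta (xs s) (Htil xs bx r t) * Htil xs bx s (r * t)%g)^-1 *
   (Htil xs bx s r * Htil xs bx (s * r)%g t))%g.

Definition coboundary3 (Q : groupType) (A : zmodType) (f : Q -> Q -> Q -> A)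
  : Prop :=
  exists g : Q -> Q -> A, forall s r t : Q,
    f s r t = (g r t - g (s * r)%g t + g s (r * t)%g - g s r)%R.

Definition obs_vanishes (B D Q : groupType) (A : zmodType)
  (theta : D -> B -> B) (zeta : B -> A) (xs : Q -> D) (bx : D -> B) : Prop :=
  coboundary3 (fun s r t : Q => zeta (obs_k theta xs bx s r t)).

From HB Require Import structures.
From Stdlib Require Import ClassicalEpsilon.
From mathcomp Require Import all_boot all_algebra.

Set Implicit Arguments.
Unset Strict Implicit.
Unset Printing Implicit Defensive.
Import GRing.Theory.
Local Open Scope group_scope.

(* If a zeta-extension (E, j, p, beta) exists, lift the representatives x_s to
   elements e_s of E; then beta(H_{r,s}) = j(c(r,s)) e_r e_s e_{rs}^-1 for some
   c : Q -> Q -> A, and applying beta to the relation defining k gives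
   zeta o k = delta(-c).
   Conversely, if zeta o k = delta g, write every x in D as d(w) x_q with
   q = pi x.  Coordinates (w, q) multiply as (w, q)(w', r) =
   (w theta_{x_q}(w') H_{q,r}, qr), associatively up to right multiplication
   by k(q,r,t), and the canonical coordinate b_x^-1 of x differs from any other
   one by an element of Ker d.  Measuring with zeta how far the product of
   canonical coordinates is from being canonical, and correcting by g, yields a
   normalized 2-cocycle F on D; the twisted product A x_F D with
   beta(b) = (zeta(b_{d b} b), d b) is the required extension. *)

Lemma ghom1 (G H : groupType) (f : G -> H) : ghom f -> f 1 = 1.
Proof. by move=> fM; apply: (@mulgI _ (f 1)); rewrite -fM !mulg1. Qed.

Lemma ghomV (G H : groupType) (f : G -> H) x : ghom f -> f x^-1 = (f x)^-1.
Proof. by move=> fM; apply/esym/mulg1_eq; rewrite -fM mulgV ghom1. Qed.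

Section CentralElements.
Variable G : groupType.
Implicit Types u v w : G.

Lemma mulg_centralACA J' : (forall z, commute J' z) ->
  forall J v w, J * v * (J' * w) = J * J' * (v * w).
Proof. by move=> cJ' J v w; rewrite -!mulgA (mulgA v) -(cJ' v) -mulgA. Qed.

Lemma conjg_central J : (forall z, commute J z) ->
  forall u v, u * (J * v) / u = J * (u * v / u).
Proof. by move=> cJ u v; rewrite mulgA -(cJ u) !mulgA. Qed.

Lemma invg_central_mul J J' : (forall z, commute J z) -> (forall z, commute J' z) ->
  forall v, (J * v)^-1 * (J' * v) = J^-1 * J'.
Proof. by move=> cJ cJ' v; rewrite (cJ v) (cJ' v) invgM -mulgA mulKg. Qed.

End CentralElements.

Definition normalized_cocycle (D : groupType) (A : zmodType) (F : D -> D -> A) :=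
  [/\ forall x y z, (F x y + F (x * y)%g z = F y z + F x (y * z)%g)%R,
      forall y, F 1%g y = 0%R & forall x, F x 1%g = 0%R].

Definition cocycle_ext (D : groupType) (A : zmodType) (F : D -> D -> A)
  (_ : normalized_cocycle F) : Type := (A * D)%type.

HB.instance Definition _ D A F Fco := Choice.on (@cocycle_ext D A F Fco).

Section CocycleExtension.
Variables (D : groupType) (A : zmodType) (F : D -> D -> A).
Hypothesis Fco : normalized_cocycle F.
Local Notation E := (cocycle_ext Fco).

Definition cext_mul (u v : E) : E := ((u.1 + v.1 + F u.2 v.2)%R, u.2 * v.2).
Definition cext_one : E := (0%R, 1).
Definition cext_inv (u : E) : E := ((- u.1 - F u.2^-1 u.2)%R, u.2^-1).

Lemma cext_mulA : associative cext_mul.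
Proof.
have [FA _ _] := Fco; move=> [a x] [b y] [c z]; rewrite /cext_mul /=.
congr pair; last by rewrite mulgA.
by rewrite -!addrA; congr (a + (b + _))%R; rewrite -FA addrCA.
Qed.

Lemma cext_mul1g : left_id cext_one cext_mul.
Proof. by have [_ F1 _] := Fco; move=> [a x]; rewrite /cext_mul /= F1 add0r addr0 mul1g. Qed.

Lemma cext_mulg1 : right_id cext_one cext_mul.
Proof. by have [_ _ F1] := Fco; move=> [a x]; rewrite /cext_mul /= F1 !addr0 mulg1. Qed.

Lemma cext_mulVg : left_inverse cext_one cext_inv cext_mul.
Proof. by move=> [a x]; rewrite /cext_mul /= (addrAC (- a)%R) addNr add0r addNr mulVg. Qed.

Lemma cext_mulgV : right_inverse cext_one cext_inv cext_mul.
Proof.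
have [FA F1 F1'] := Fco; move=> [a x]; rewrite /cext_mul /= mulgV; congr pair.
have := FA x x^-1 x; rewrite mulgV mulVg F1 F1' !addr0 => ->.
by rewrite addrA subrr sub0r addNr.
Qed.

End CocycleExtension.

HB.instance Definition _ D A F Fco :=
  isGroup.Build (@cocycle_ext D A F Fco) (@cext_mulA D A F Fco)
    (@cext_mul1g D A F Fco) (@cext_mulg1 D A F Fco)
    (@cext_mulVg D A F Fco) (@cext_mulgV D A F Fco).

Lemma cext_mulE D A F Fco (u v : @cocycle_ext D A F Fco) :
  u * v = ((u.1 + v.1 + F u.2 v.2)%R, u.2 * v.2) :> cocycle_ext Fco.
Proof. by []. Qed.

Section CrossedModule.
Variables (B D : groupType) (d : B -> D) (theta : D -> B -> B).
Hypothesis dtheta : crossed_module d theta.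

Lemma dM : ghom d. Proof. by case: dtheta. Qed.
Lemma thetaM x : ghom (theta x). Proof. by case: dtheta => _ []. Qed.
Lemma thetaMl x y b : theta (x * y) b = theta x (theta y b).
Proof. by case: dtheta => _ [_ []]. Qed.
Lemma theta1 b : theta 1 b = b. Proof. by case: dtheta => _ [_ [_ []]]. Qed.
Lemma theta_d b b' : theta (d b) b' = b * b' * b^-1.
Proof. by case: dtheta => _ [_ [_ [_ []]]]. Qed.
Lemma d_theta x b : d (theta x b) = x * d b * x^-1.
Proof. by case: dtheta => _ [_ [_ [_ []]]]. Qed.

Lemma d1 : d 1 = 1. Proof. exact: ghom1 dM. Qed.
Lemma dV b : d b^-1 = (d b)^-1. Proof. exact: ghomV dM. Qed.
Lemma theta_x1 x : theta x 1 = 1. Proof. exact: ghom1 (thetaM x). Qed.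

Lemma ker_central c : d c = 1 -> forall b, commute c b.
Proof.
by move=> dc b; have := theta_d c b; rewrite dc theta1 /commute => {2}->; rewrite mulgVK.
Qed.

Lemma d_theta_ker x c : d c = 1 -> d (theta x c) = 1.
Proof. by move=> dc; rewrite d_theta dc mulg1 mulgV. Qed.

Section Cokernel.
Variables (Q : groupType) (pi : D -> Q) (xs : Q -> D) (bx : D -> B).
Hypotheses (dpi : is_cokernel d pi) (xsbx : obstruction_data d pi xs bx).
Local Notation H := (Htil xs bx).
Local Notation k := (obs_k theta xs bx).

Lemma piM : ghom pi. Proof. by case: dpi. Qed.
Lemma pi_d b : pi (d b) = 1. Proof. by case: dpi => _ _ ->; exists b. Qed.
Lemma pi_xs s : pi (xs s) = s. Proof. by case: xsbx. Qed.
Lemma xs1 : xs 1 = 1. Proof. by case: xsbx. Qed.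
Lemma xs_pi x : xs (pi x) = d (bx x) * x. Proof. by case: xsbx. Qed.
Lemma bx_xs s : bx (xs s) = 1. Proof. by case: xsbx. Qed.

Lemma bx1 : bx 1 = 1. Proof. by rewrite -xs1 bx_xs. Qed.

Lemma pi1 : pi 1 = 1. Proof. exact: ghom1 piM. Qed.

Lemma theta_xs_pi x b : theta (xs (pi x)) b = bx x * theta x b * (bx x)^-1.
Proof. by rewrite xs_pi thetaMl theta_d. Qed.

Lemma H1r r : H 1 r = 1. Proof. by rewrite /Htil xs1 mul1g bx_xs invg1. Qed.
Lemma Hq1 q : H q 1 = 1. Proof. by rewrite /Htil xs1 mulg1 bx_xs invg1. Qed.

Lemma dH q r : d (H q r) * xs (q * r) = xs q * xs r.
Proof.
have -> : q * r = pi (xs q * xs r) by rewrite piM !pi_xs.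
by rewrite /Htil dV xs_pi mulKg.
Qed.

Lemma theta_H q r u :
  theta (xs q) (theta (xs r) u) * H q r = H q r * theta (xs (q * r)) u.
Proof. by rewrite -thetaMl -dH thetaMl theta_d mulgVK. Qed.

Lemma obs_k_ker s r t : d (k s r t) = 1.
Proof.
have dl : d (theta (xs s) (H r t) * H s (r * t)) * xs (s * r * t) = xs s * xs r * xs t.
  by rewrite -(mulgA s) dM d_theta -mulgA dH mulgA mulgVK -mulgA dH mulgA.
have dr : d (H s r * H (s * r) t) * xs (s * r * t) = xs s * xs r * xs t.
  by rewrite dM -mulgA dH mulgA dH.
have /mulIg dlr := etrans dl (esym dr).
by rewrite /obs_k dM dV dlr mulVg.
Qed.

Lemma obs_k11t t : k 1 1 t = 1.
Proof. by rewrite /obs_k !mul1g !H1r xs1 theta1 !mulg1 invg1. Qed.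

Lemma obs_ks11 s : k s 1 1 = 1.
Proof. by rewrite /obs_k !mulg1 !Hq1 theta_x1 !mulg1 invg1. Qed.

(* [dxs w q] is the element of D with coordinates (w, q); every x is
   [dxs (bx x)^-1 (pi x)], and [defect w q], an element of Ker d, compares w
   with that canonical coordinate. *)
Definition dxs w q := d w * xs q.
Definition coord_mul w w' q r := w * theta (xs q) w' * H q r.
Definition defect w q := bx (dxs w q) * w.

Lemma pi_dxs w q : pi (dxs w q) = q.
Proof. by rewrite /dxs piM pi_d mul1g pi_xs. Qed.

Lemma dxs_bx x : dxs (bx x)^-1 (pi x) = x.
Proof. by rewrite /dxs dV xs_pi mulKg. Qed.

Lemma dxs1 w : dxs w 1 = d w.
Proof. by rewrite /dxs xs1 mulg1. Qed.

Lemma dxs_mul w w' q r : dxs (coord_mul w w' q r) (q * r) = dxs w q * dxs w' r.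
Proof. by rewrite /dxs !dM -[_ * d (H q r) * _]mulgA dH d_theta !mulgA mulgVK. Qed.

Lemma coord_mulA w1 w2 w3 q r t :
  coord_mul (coord_mul w1 w2 q r) w3 (q * r) t
  = coord_mul w1 (coord_mul w2 w3 r t) q (r * t) * k q r t.
Proof.
rewrite /coord_mul /obs_k !thetaM !mulgA.
rewrite -(mulgA _ (theta (xs q) (H r t)) (H q (r * t))) mulgK.
by rewrite -(mulgA _ (theta (xs q) (theta (xs r) w3)) (H q r)) theta_H !mulgA.
Qed.

Lemma coord_mul_ker w w' c c' q r : d c = 1 -> d c' = 1 ->
  coord_mul (w * c) (w' * c') q r = coord_mul w w' q r * (c * theta (xs q) c').
Proof.
move=> dc dc'; rewrite /coord_mul thetaM -!mulgA; congr (w * _).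
rewrite (ker_central dc (theta _ w' * _)) -!mulgA.
by rewrite [theta _ c' * _](ker_central (d_theta_ker _ dc')) -mulgA.
Qed.

Lemma d_defect w q : d (defect w q) = 1.
Proof.
have e := xs_pi (dxs w q); rewrite pi_dxs in e.
rewrite /defect dM; have -> : d (bx (dxs w q)) = xs q / dxs w q by rewrite e mulgK.
by rewrite /dxs invgM mulVKg mulVg.
Qed.

Lemma defect_mulr w c q : d c = 1 -> defect (w * c) q = defect w q * c.
Proof. by move=> dc; rewrite /defect /dxs dM dc mulg1 mulgA. Qed.

Lemma defect_bx x : defect (bx x)^-1 (pi x) = 1.
Proof. by rewrite /defect dxs_bx mulgV. Qed.

Lemma defect1 c : d c = 1 -> defect c 1 = c.
Proof. by move=> dc; rewrite /defect dxs1 dc bx1 mul1g. Qed.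

Lemma obs_vanishes_of_extension (A : zmodType) (zeta : B -> A) :
  zeta_extension_exists d theta zeta -> obs_vanishes theta zeta xs bx.
Proof.
move=> [E [j [p [beta [jD [pM [j_inj [pker [psurj
  [jC [betaM [p_beta [beta_conj beta_zeta]]]]]]]]]]]]].
have [es p_es] := choice (fun q e => p e = xs q) (fun q => psurj (xs q)).
pose sigma q r := es q * es r / es (q * r).
have [c beta_H] : exists c : Q -> Q -> A, forall q r, beta (H q r) = j (c q r) * sigma q r.
  have [c Hc] : exists c : Q * Q -> A,
      forall qr, beta (H qr.1 qr.2) = j (c qr) * sigma qr.1 qr.2.
    apply: (choice (fun qr a => beta (H qr.1 qr.2) = j a * sigma qr.1 qr.2)) => -[q r] /=.
    have : p (beta (H q r) / sigma q r) = 1.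
      by rewrite pM p_beta (ghomV _ pM) !pM (ghomV _ pM) !p_es -dH mulgK mulgV.
    by move/pker=> [a ea]; exists a; rewrite -ea mulgVK.
  by exists (fun q r => c (q, r)) => q r; apply: (Hc (q, r)).
have jN a : j (- a)%R = (j a)^-1.
  have j0 : j 0%R = 1 by apply: (@mulgI _ (j 0%R)); rewrite -jD addr0 mulg1.
  by apply/esym/mulg1_eq; rewrite -jD subrr.
exists (fun q r => - c q r)%R => s r t.
have beta_l : beta (theta (xs s) (H r t) * H s (r * t))
    = j (c r t + c s (r * t)%g)%R * (es s * es r * es t / es (s * r * t)).
  rewrite betaM (beta_conj _ (es s)) // !beta_H (conjg_central (jC _)).
  by rewrite (mulg_centralACA (jC _)) -jD !mulgA !mulgVK.
have beta_r : beta (H s r * H (s * r) t)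
    = j (c s r + c (s * r)%g t)%R * (es s * es r * es t / es (s * r * t)).
  by rewrite betaM !beta_H (mulg_centralACA (jC _)) -jD !mulgA mulgVK.
apply: j_inj; rewrite beta_zeta ?obs_k_ker // /obs_k betaM (ghomV _ betaM).
rewrite beta_l beta_r (invg_central_mul (jC _) (jC _)) -jN -jD; congr j.
by rewrite opprD !opprK addrA addrAC (addrAC (- c r t)%R).
Qed.

Section Kernel.
Variables (A : zmodType) (zeta : B -> A).
Hypothesis zeta_kernel : abstract_kernel d theta zeta.

Lemma zetaM c c' : d c = 1 -> d c' = 1 -> zeta (c * c') = (zeta c + zeta c')%R.
Proof. by case: zeta_kernel => zM _; apply: zM. Qed.

Lemma zeta_theta x c : d c = 1 -> zeta (theta x c) = zeta c.
Proof. by case: zeta_kernel => _ zth; apply: zth. Qed.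

Lemma zeta1 : zeta 1 = 0%R.
Proof. by apply/esym/(@addIr _ (zeta 1)); rewrite add0r -zetaM ?d1 ?mulg1. Qed.

Section Coboundary.
Variable g0 : Q -> Q -> A.
Hypothesis zeta_k : forall s r t,
  zeta (k s r t) = (g0 r t - g0 (s * r) t + g0 s (r * t) - g0 s r)%R.

(* Since k vanishes on (1, 1, t) and (s, 1, 1), this shift makes the cochain
   normalized. *)
Definition gnorm q r := (g0 q r - g0 1 1)%R.

Lemma zeta_k_coboundary s r t :
  (zeta (k s r t) + (gnorm s r + gnorm (s * r) t) = gnorm r t + gnorm s (r * t))%R.
Proof.
rewrite zeta_k /gnorm !addrA subrK (addrAC _ (- g0 1 1)%R (g0 (s * r) t)).
rewrite (addrAC (g0 r t - g0 (s * r) t)%R (g0 s (r * t))) subrK.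
by rewrite -!addrA; congr (_ + _)%R; rewrite addrCA.
Qed.

Lemma gnorm11 : gnorm 1 1 = 0%R. Proof. exact: subrr. Qed.

Lemma gnorm1r r : gnorm 1 r = 0%R.
Proof.
have := zeta_k_coboundary 1 1 r; rewrite obs_k11t zeta1 add0r !mul1g gnorm11 add0r.
by rewrite -{1}[gnorm 1 r]add0r => /(addIr _) <-.
Qed.

Lemma gnormq1 q : gnorm q 1 = 0%R.
Proof.
have := zeta_k_coboundary q 1 1; rewrite obs_ks11 zeta1 add0r !mulg1 gnorm11.
by move=> /(addIr _).
Qed.

Definition ext_cocycle x y := (gnorm (pi x) (pi y)
  + zeta (defect (coord_mul (bx x)^-1 (bx y)^-1 (pi x) (pi y)) (pi x * pi y)))%R.

Lemma ext_cocycle_dxs w w' q r :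
  (ext_cocycle (dxs w q) (dxs w' r) + (zeta (defect w q) + zeta (defect w' r))
   = gnorm q r + zeta (defect (coord_mul w w' q r) (q * r)))%R.
Proof.
have dc := d_defect w q; have dc' := d_defect w' r.
have -> : coord_mul w w' q r = coord_mul (bx (dxs w q))^-1 (bx (dxs w' r))^-1 q r
                                 * (defect w q * theta (xs q) (defect w' r)).
  by rewrite -coord_mul_ker // /defect !mulKg.
have dcc : d (defect w q * theta (xs q) (defect w' r)) = 1.
  by rewrite dM dc d_theta_ker // mulg1.
rewrite /ext_cocycle !pi_dxs defect_mulr // zetaM ?d_defect //.
by rewrite zetaM ?d_theta_ker // zeta_theta // !addrA.
Qed.

Lemma ext_cocycle_dxs_l w q y : (ext_cocycle (dxs w q) y + zeta (defect w q)
  = gnorm q (pi y) + zeta (defect (coord_mul w (bx y)^-1 q (pi y)) (q * pi y)))%R.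
Proof. by have := ext_cocycle_dxs w (bx y)^-1 q (pi y); rewrite dxs_bx defect_bx zeta1 addr0. Qed.

Lemma ext_cocycle_dxs_r x w r : (ext_cocycle x (dxs w r) + zeta (defect w r)
  = gnorm (pi x) r + zeta (defect (coord_mul (bx x)^-1 w (pi x) r) (pi x * r)))%R.
Proof. by have := ext_cocycle_dxs (bx x)^-1 w (pi x) r; rewrite dxs_bx defect_bx zeta1 add0r. Qed.

Lemma ext_cocycle_identity x y z :
  (ext_cocycle x y + ext_cocycle (x * y) z = ext_cocycle y z + ext_cocycle x (y * z))%R.
Proof.
set q := pi x; set r := pi y; set t := pi z.
set Wxy := coord_mul (bx x)^-1 (bx y)^-1 q r.
set Wyz := coord_mul (bx y)^-1 (bx z)^-1 r t.
have Fxy : ext_cocycle x y = (gnorm q r + zeta (defect Wxy (q * r)))%R by [].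
have Fyz : ext_cocycle y z = (gnorm r t + zeta (defect Wyz (r * t)))%R by [].
have := ext_cocycle_dxs_l Wxy (q * r) z; rewrite dxs_mul !dxs_bx -/t => Fxy_z.
have := ext_cocycle_dxs_r x Wyz (r * t); rewrite dxs_mul !dxs_bx -/q => Fx_yz.
have W_assoc : zeta (defect (coord_mul Wxy (bx z)^-1 (q * r) t) (q * r * t))
    = (zeta (defect (coord_mul (bx x)^-1 Wyz q (r * t)) (q * (r * t)))
       + zeta (k q r t))%R.
  rewrite coord_mulA -(mulgA q r t) defect_mulr ?obs_k_ker //.
  by rewrite zetaM ?d_defect ?obs_k_ker.
rewrite Fxy Fyz -[LHS]addrA -[RHS]addrA.
rewrite (addrC (zeta (defect Wxy _))) Fxy_z (addrC (zeta (defect Wyz _))) Fx_yz.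
rewrite W_assoc (addrC _ (zeta (k q r t))) [LHS]addrA [LHS]addrCA [LHS]addrA.
by rewrite zeta_k_coboundary -[LHS]addrA.
Qed.

Lemma ext_cocycle1x y : ext_cocycle 1 y = 0%R.
Proof.
rewrite /ext_cocycle pi1 gnorm1r bx1 invg1 /coord_mul xs1 theta1 H1r !mul1g mulg1.
by rewrite defect_bx zeta1 addr0.
Qed.

Lemma ext_cocyclex1 x : ext_cocycle x 1 = 0%R.
Proof.
rewrite /ext_cocycle pi1 gnormq1 bx1 invg1 /coord_mul theta_x1 Hq1 !mulg1.
by rewrite defect_bx zeta1 addr0.
Qed.

Lemma ext_cocycle_normalized : normalized_cocycle ext_cocycle.
Proof. by split; [exact: ext_cocycle_identity | exact: ext_cocycle1x | exact: ext_cocyclex1]. Qed.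

Lemma ext_cocycle_d b b' : (ext_cocycle (d b) (d b') + (zeta (defect b 1) + zeta (defect b' 1))
                            = zeta (defect (b * b') 1))%R.
Proof.
have := ext_cocycle_dxs b b' 1 1.
by rewrite !dxs1 gnorm11 add0r /coord_mul xs1 theta1 Hq1 !mulg1.
Qed.

Lemma ext_cocycle_theta x b : (zeta (defect (theta x b) 1) + ext_cocycle (d (theta x b)) x
                    = zeta (defect b 1) + ext_cocycle x (d b))%R.
Proof.
rewrite [LHS]addrC [RHS]addrC.
have := ext_cocycle_dxs (theta x b) (bx x)^-1 1 (pi x).
rewrite dxs1 dxs_bx defect_bx zeta1 addr0 gnorm1r add0r mul1g => ->.
have := ext_cocycle_dxs (bx x)^-1 b (pi x) 1.
rewrite dxs1 dxs_bx defect_bx zeta1 add0r gnormq1 add0r mulg1 => ->.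
by rewrite /coord_mul xs1 theta1 H1r Hq1 !mulg1 theta_xs_pi !mulgA mulVg mul1g.
Qed.

Lemma zeta_extension_of_coboundary : zeta_extension_exists d theta zeta.
Proof.
pose E := cocycle_ext ext_cocycle_normalized.
exists E, (fun a => (a, 1) : E), (fun e : E => e.2),
  (fun b => (zeta (defect b 1), d b) : E).
split=> [a a'|]; first by rewrite cext_mulE /= ext_cocyclex1 addr0 mulg1.
split=> [u v|]; first by rewrite cext_mulE.
split=> [a a' [] //|].
split=> [[a x] /=|]; first by split=> [->|[a' [_ ->]]]; first exists a.
split=> [x|]; first by exists (0%R, x).
split=> [a [a' x]|].
  by rewrite !cext_mulE /= ext_cocycle1x ext_cocyclex1 mul1g mulg1 !addr0 addrC.
split=> [b b'|].
  by rewrite cext_mulE /= -ext_cocycle_d dM addrC.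
split=> [//|].
split=> [x [a y] b /= <-|c dc].
  apply: (@mulIg E (a, y)); rewrite mulgVK !cext_mulE /=.
  congr pair; last by rewrite d_theta mulgVK.
  by rewrite addrAC ext_cocycle_theta addrC addrA.
by rewrite defect1 // dc.
Qed.

End Coboundary.
End Kernel.

End Cokernel.
End CrossedModule.

Theorem mainTheorem4 (B D : groupType) (d : B -> D) (theta : D -> B -> B)
  (A : zmodType) (zeta : B -> A)
  (Q : groupType) (pi : D -> Q) (xs : Q -> D) (bx : D -> B) :
  crossed_module d theta ->
  abstract_kernel d theta zeta ->
  kernel_surjective d zeta ->
  is_cokernel d pi ->
  obstruction_data d pi xs bx ->
  (zeta_extension_exists d theta zeta <-> obs_vanishes theta zeta xs bx).
Proof.
move=> dtheta zeta_kernel _ dpi xsbx; split.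
  exact: (obs_vanishes_of_extension dtheta dpi xsbx (zeta := zeta)).
case=> g0 zeta_k.
exact: (zeta_extension_of_coboundary dtheta dpi xsbx zeta_kernel zeta_k).
Qed.
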